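(* Let $g\ge1$, $A=\begin{pmatrix}0&0\\1&0\end{pmatrix}$, and let $\mathcal M_A=\{X(\lambda)=\lambda^{g+1}A+\sum_{i=0}^g\lambda^iX_i\mid X_i\in\mathfrak{sl}(2)\}$ with the Poisson tensor $P_0$ described in the context. The symplectic leaves of $P_0$ have dimension $2(g+1)$. Moreover, define $H(\lambda):\mathcal M_A\to\mathbb C$ by $H(X(\lambda))=\tfrac12\mathrm{Tr}\,X(\lambda)^2$ and let $H_i$ be the coefficient of $\lambda^i$ in $H(\lambda)$. Then $H_{2g+1},\dots,H_{g+1}$ are functionally independent Casimir functions of $P_0$, and consequently the symplectic leaves of $P_0$ are the level surfaces of these Casimirs.
   Context: Tangent and cotangent spaces of $\mathcal M_A\cong\mathfrak{sl}(2)^{g+1}$ are identified with $\mathfrak{sl}(2)^{g+1}$ via the pairing $\langle(V_i),(W_i)\rangle=\sum_{i=0}^g\mathrm{Tr}(V_iW_i)$. Put $X_{g+1}:=A$ and $X_m:=0$ for $m>g+1$. The Poisson tensor $P_0$ maps a covector $(W_0,\dots,W_g)$ to the vector $(\dot X_0,\dots,\dot X_g)$ with $\dot X_i=\sum_{j=0}^{g-i}[X_{i+j+1},W_j]$. *)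

From HB Require Import structures.
From mathcomp Require Import all_boot all_order all_algebra.
Set Implicit Arguments. Unset Strict Implicit. Unset Printing Implicit Defensive.
Import GRing.Theory Num.Theory.
Local Open Scope ring_scope.

Definition Amx (R : nzRingType) : 'M[R]_2 :=
  \matrix_(i < 2, j < 2) (((i : nat) == 1%N) && ((j : nat) == 0%N))%:R.

(* Points (and tangent / cotangent vectors) of M_A ~ sl(2)^{g+1}:
   families (X_0, ..., X_g) of 2x2 matrices; sl(2)-membership is [slpt]. *)
Notation pt R g := {ffun 'I_g.+1 -> 'M[R]_2}.

Definition slpt (R : nzRingType) g (X : pt R g) : Prop :=
  forall i, \tr (X i) = 0.

Definition Xext (R : nzRingType) g (X : pt R g) (m : nat) : 'M[R]_2 :=
  if (m < g.+1)%N then X (inord m)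
  else if m == g.+1 then Amx R else 0.

Definition Xlam (R : nzRingType) g (X : pt R g) : 'M[{poly R}]_2 :=
  \matrix_(r < 2, s < 2) \sum_(i < g.+2) (Xext X i r s)%:P * 'X^i.

Definition Hcoef (R : comUnitRingType) g (X : pt R g) (k : nat) : R :=
  (\tr (Xlam X *m Xlam X))`_k / 2.

(* Differential of H_k at X applied to the tangent vector V:
   d/dt H_k(X + t V) at t = 0, computed as the coefficient of t^1 of the
   polynomial t |-> H_k(X + t V). *)
Definition dH (C : fieldType) g (X : pt C g) (k : nat) (V : pt C g) : C :=
  (Hcoef [ffun i => map_mx polyC (X i) + 'X *: map_mx polyC (V i)] k)`_1.

Definition pairing (R : nzRingType) g (V W : pt R g) : R :=
  \sum_(i < g.+1) \tr (V i *m W i).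

Definition lie (R : nzRingType) (a b : 'M[R]_2) : 'M[R]_2 := a *m b - b *m a.

Definition P0 (R : nzRingType) g (X W : pt R g) : pt R g :=
  [ffun i : 'I_g.+1 => \sum_(j < g.+1 | (i + j <= g)%N)
       lie (Xext X (i + j + 1)) (W j)].

Definition slspace (C : fieldType) g : {vspace pt C g} :=
  lker (linfun (fun W : pt C g => \row_(i < g.+1) \tr (W i))).

From HB Require Import structures.
From mathcomp Require Import all_boot all_order all_algebra.
From mathcomp Require Import zify ring.
Set Implicit Arguments. Unset Strict Implicit. Unset Printing Implicit Defensive.
Import GRing.Theory Num.Theory.
Local Open Scope ring_scope.

(* For k >= g+1 the gradient of H_k is (X_{k-j})_j, and the i-th component of
   P_0 applied to it is a sum of brackets [X_a, X_b] with a + b constant; the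
   reversal of the summation range swaps the two arguments, so it vanishes.
   Pairing the differentials of H_{g+1}, ..., H_{2g+1} with the vectors E_12
   placed in the m-th slot gives a triangular matrix with diagonal
   Tr(E_12 A) = 1, hence they are independent and their joint kernel in
   sl(2)^{g+1} has dimension 2(g+1). That kernel contains the image of P_0,
   because P_0 is skew. On the other hand ker P_0 has dimension at most g+1:
   the (g-m)-th component of P_0 W is [A, W_m] plus brackets with W_j, j < m,
   so W is determined by the lower-left entries of the W_m. Hence
   rank P_0 >= 3(g+1) - (g+1), and the image of P_0 is the joint kernel. *)

Lemma double_eq0 (C : fieldType) (V : lmodType C) (v : V) :
  (2 : C) != 0 -> v *+ 2 = 0 -> v = 0.
Proof. by move=> h2 /eqP; rewrite -scaler_nat scaler_eq0 (negbTE h2) => /eqP. Qed.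

Lemma sumr_ord_trunc (V : nmodType) (F : nat -> V) m n :
  (m <= n)%N -> (forall j, (m <= j)%N -> F j = 0) ->
  \sum_(j < n) F j = \sum_(j < m) F j.
Proof.
move=> lemn F0; rewrite (big_ord_widen _ _ lemn) [RHS]big_mkcond [LHS]big_mkcond /=.
by apply: eq_bigr => i _; case: ifP => // /negbT; rewrite -leqNgt => /F0.
Qed.

Lemma mxtrace_delta (R : nzRingType) n (i j : 'I_n) :
  \tr (delta_mx i j : 'M[R]_n) = (i == j)%:R.
Proof.
rewrite /mxtrace (bigD1 i) //= mxE eqxx /= big1 ?addr0 // => k /negbTE nki.
by rewrite mxE nki.
Qed.

Lemma coef1_mxtrace_mul (R : comNzRingType) n (x y x' y' : 'M[R]_n) :
  (\tr ((map_mx polyC x + 'X *: map_mx polyC y) *m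
        (map_mx polyC x' + 'X *: map_mx polyC y')))`_1
  = \tr (x *m y') + \tr (y *m x').
Proof.
rewrite mulmxDl !mulmxDr -!scalemxAl -!scalemxAr scalerA -!map_mxM.
rewrite !mxtraceD !mxtraceZ !trace_map_mx !coefD coefC /=.
by rewrite -mulrA !coefXM /= !coefC /= add0r addr0.
Qed.

(* [i1] is spelled the way [big_ord_recl] produces the second index. *)
Local Notation i0 := (ord0 : 'I_2).
Local Notation i1 := (lift ord0 (ord0 : 'I_1)).

Lemma mxtrace2 (R : nzRingType) (M : 'M[R]_2) : \tr M = M i0 i0 + M i1 i1.
Proof. by rewrite /mxtrace !big_ord_recl big_ord0 addr0. Qed.

Lemma mulmx2E (R : nzRingType) (M N : 'M[R]_2) i j :
  (M *m N) i j = M i i0 * N i0 j + M i i1 * N i1 j.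
Proof. by rewrite mxE !big_ord_recl big_ord0 addr0. Qed.

Lemma ord2P (i : 'I_2) : i = i0 \/ i = i1.
Proof. by case: i => [[|[|//]] ?]; [left|right]; apply: val_inj. Qed.

Lemma matrix2P (R : nzRingType) (M N : 'M[R]_2) :
  M i0 i0 = N i0 i0 -> M i0 i1 = N i0 i1 -> M i1 i0 = N i1 i0 ->
  M i1 i1 = N i1 i1 -> M = N.
Proof.
move=> e00 e01 e10 e11; apply/matrixP => i j.
by case: (ord2P i) => ->; case: (ord2P j) => ->.
Qed.

Lemma mxtrace_mul_delta (R : comNzRingType) (M : 'M[R]_2) i j :
  \tr (M *m delta_mx i j) = M j i.
Proof.
rewrite mxtrace2 !mulmx2E !mxE.
by case: (ord2P i) => ->; case: (ord2P j) => -> /=; rewrite !(mulr0, mulr1, addr0, add0r).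
Qed.

Lemma Amx_delta (R : nzRingType) : Amx R = delta_mx i1 i0.
Proof.
by apply/matrixP => i j; rewrite !mxE; case: (ord2P i) => ->; case: (ord2P j) => ->.
Qed.

Lemma sl2_diag_eq0 (C : fieldType) (M : 'M[C]_2) : (2 : C) != 0 ->
  \tr M = 0 -> M i0 i0 = M i1 i1 -> M i0 i0 = 0 /\ M i1 i1 = 0.
Proof.
move=> two_neq0; rewrite mxtrace2 => trM eqd.
have M00 : M i0 i0 = 0 by apply: (@double_eq0 _ C^o) => //; rewrite mulr2n {2}eqd.
by split; rewrite -?eqd.
Qed.

Lemma sl2_trace_form_nondeg (C : fieldType) (Y : 'M[C]_2) :
  (2 : C) != 0 -> \tr Y = 0 ->
  (forall Z : 'M[C]_2, \tr Z = 0 -> \tr (Y *m Z) = 0) -> Y = 0.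
Proof.
move=> two_neq0 trY perpY.
have Y10 : Y i1 i0 = 0 by rewrite -mxtrace_mul_delta perpY // mxtrace_delta.
have Y01 : Y i0 i1 = 0 by rewrite -mxtrace_mul_delta perpY // mxtrace_delta.
have Ydiag : Y i0 i0 = Y i1 i1.
  apply: subr0_eq; rewrite -!mxtrace_mul_delta -(raddfB (@mxtrace _ 2)) -mulmxBr.
  by apply: perpY; rewrite mxtrace2 !mxE /= subr0 add0r subrr.
have [Y00 Y11] := sl2_diag_eq0 two_neq0 trY Ydiag.
by apply: matrix2P; rewrite mxE.
Qed.

Lemma sl2_centralizer_Amx (C : fieldType) (W : 'M[C]_2) :
  (2 : C) != 0 -> \tr W = 0 -> lie (Amx C) W = 0 -> W = W i1 i0 *: Amx C.
Proof.
move=> two_neq0 trW AW.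
have entry i j : (Amx C *m W - W *m Amx C) i j = 0 by rewrite -[_ - _]/(lie _ _) AW mxE.
move: (entry i0 i0) (entry i1 i0); rewrite Amx_delta !mxE !big_ord_recl !big_ord0 !mxE /=.
rewrite !(mulr0, mul0r, mulr1, mul1r, addr0, add0r, sub0r) => /eqP.
rewrite oppr_eq0 => /eqP W01 /subr0_eq Wdiag.
have [W00 W11] := sl2_diag_eq0 two_neq0 trW Wdiag.
by apply: matrix2P; rewrite !mxE /= ?mulr0 ?mulr1.
Qed.

Section PoissonTensor.
Variables (R : comNzRingType) (g : nat).
Implicit Types X W U V : pt R g.

Lemma lie_linear (Y : 'M[R]_2) : linear (lie Y).
Proof.
move=> a U V.
by rewrite /lie mulmxDr mulmxDl -scalemxAr -scalemxAl scalerBr opprD addrACA.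
Qed.

Lemma lie_antisym (Y Z : 'M[R]_2) : lie Y Z = - lie Z Y.
Proof. by rewrite /lie opprB. Qed.

Lemma mxtrace_lie (Y Z : 'M[R]_2) : \tr (lie Y Z) = 0.
Proof. by rewrite /lie raddfB /= mxtrace_mulC subrr. Qed.

Lemma mxtrace_lie_mul (Y Z U : 'M[R]_2) :
  \tr (lie Y Z *m U) = - \tr (Z *m lie Y U).
Proof.
rewrite /lie mulmxBl mulmxBr !raddfB /= -!mulmxA opprK addrC.
by rewrite [\tr (Y *m _)]mxtrace_mulC -mulmxA.
Qed.

Lemma P0_linear X : linear (P0 X).
Proof.
move=> a W U; apply/ffunP => i; rewrite !ffunE scaler_sumr -big_split /=.
by apply: eq_bigr => j _; rewrite !ffunE lie_linear.
Qed.

Definition mxtrace_pt W : 'rV[R]_g.+1 := \row_i \tr (W i).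

Lemma mxtrace_pt_linear : linear mxtrace_pt.
Proof. by move=> a W U; apply/rowP => i; rewrite !mxE !ffunE mxtraceD mxtraceZ. Qed.

Lemma Xext_gt X m : (g.+1 < m)%N -> Xext X m = 0.
Proof. by move=> ltm; rewrite /Xext ltnNge (ltnW ltm) /= gtn_eqF. Qed.

Lemma Xext_traceless X m : slpt X -> \tr (Xext X m) = 0.
Proof.
rewrite /Xext => slX; case: ifP => _; first exact: slX.
by case: ifP => _; rewrite ?Amx_delta ?mxtrace_delta ?mxtrace0.
Qed.

Lemma P0_traceless X W : slpt (P0 X W).
Proof. by move=> i; rewrite ffunE raddf_sum big1 // => j _; exact: mxtrace_lie. Qed.

Lemma pairingC V W : pairing V W = pairing W V.
Proof. by apply: eq_bigr => i _; rewrite mxtrace_mulC. Qed.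

Lemma pairing_P0 X W U : pairing (P0 X W) U = - pairing W (P0 X U).
Proof.
rewrite /pairing -sumrN.
have unfoldl i : \tr (P0 X W i *m U i) = \sum_(j < g.+1)
    (if (i + j <= g)%N then \tr (lie (Xext X (i + j + 1)) (W j) *m U i) else 0).
  by rewrite ffunE mulmx_suml (raddf_sum (@mxtrace R 2)) big_mkcond.
have unfoldr j : - \tr (W j *m P0 X U j) = \sum_(i < g.+1)
    (if (j + i <= g)%N then - \tr (W j *m lie (Xext X (j + i + 1)) (U i)) else 0).
  rewrite ffunE mulmx_sumr (raddf_sum (@mxtrace R 2)) -sumrN big_mkcond.
  by apply: eq_bigr => i _; case: ifP; rewrite ?oppr0.
under eq_bigr do rewrite unfoldl.
under [RHS]eq_bigr do rewrite unfoldr.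
rewrite exchange_big /=; apply: eq_bigr => j _; apply: eq_bigr => i _.
by rewrite addnC; case: ifP; rewrite ?mxtrace_lie_mul.
Qed.

Definition gradH X k : pt R g := [ffun j : 'I_g.+1 => Xext X (k - j)].

Lemma gradH_traceless X k : slpt X -> slpt (gradH X k).
Proof. by move=> slX i; rewrite ffunE Xext_traceless. Qed.

Definition delta_pt (j : 'I_g.+1) (Z : 'M[R]_2) : pt R g :=
  [ffun i => if i == j then Z else 0].

Lemma delta_pt_traceless j (Z : 'M[R]_2) : \tr Z = 0 -> slpt (delta_pt j Z).
Proof. by move=> trZ i; rewrite ffunE; case: ifP; rewrite ?mxtrace0. Qed.

Lemma pairing_delta_pt W j (Z : 'M[R]_2) : pairing W (delta_pt j Z) = \tr (W j *m Z).
Proof.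
rewrite /pairing (bigD1 j) //= big1 ?addr0 ?ffunE ?eqxx // => i /negbTE nij.
by rewrite ffunE nij mulmx0 mxtrace0.
Qed.

Definition dCasimir X V : 'rV[R]_g.+1 := \row_k pairing (gradH X (g.+1 + k)) V.

Lemma dCasimir_linear X : linear (dCasimir X).
Proof.
move=> a V U; apply/rowP => k; rewrite !mxE mulr_sumr -big_split /=.
by apply: eq_bigr => j _; rewrite !ffunE mulmxDr -scalemxAr mxtraceD mxtraceZ.
Qed.

Definition lower_left_pt W : 'rV[R]_g.+1 := \row_m W m i1 i0.

Lemma lower_left_pt_linear : linear lower_left_pt.
Proof. by move=> a W U; apply/rowP => m; rewrite !mxE !ffunE !mxE. Qed.

Definition ext0 V (a : nat) : 'M[R]_2 := if (a < g.+1)%N then V (inord a) else 0.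

Lemma coef_Xlam X r s a : (Xlam X r s)`_a = Xext X a r s.
Proof.
rewrite mxE coef_sum.
under eq_bigr do rewrite coefCM coefXn.
case: (ltnP a g.+2) => lta.
  rewrite (bigD1 (Ordinal lta)) //= eqxx mulr1 big1 ?addr0 // => i.
  by rewrite -val_eqE /= eq_sym => /negbTE ->; rewrite mulr0.
rewrite big1 ?Xext_gt ?mxE // => i _.
by rewrite (gtn_eqF (leq_trans (ltn_ord i) lta)) mulr0.
Qed.

Lemma coef_mxtrace_Xlam_sq X k : (\tr (Xlam X *m Xlam X))`_k =
  \sum_(a < k.+1) \tr (Xext X a *m Xext X (k - a)).
Proof.
rewrite /mxtrace coef_sum.
under eq_bigr do rewrite mxE coef_sum.
rewrite [RHS]exchange_big /=; apply: eq_bigr => r _.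
under [RHS]eq_bigr do rewrite mxE.
rewrite [RHS]exchange_big /=; apply: eq_bigr => s _.
by rewrite coefM; apply: eq_bigr => a _; rewrite !coef_Xlam.
Qed.

Lemma Xext_perturb X V a :
  Xext [ffun i => map_mx polyC (X i) + 'X *: map_mx polyC (V i)] a
  = map_mx polyC (Xext X a) + 'X *: map_mx polyC (ext0 V a).
Proof.
rewrite /Xext /ext0; case: ifP => _; first by rewrite ffunE.
rewrite map_mx0 scaler0 addr0; case: ifP => _; last by rewrite map_mx0.
by apply/matrixP => i j; rewrite !mxE rmorph_nat.
Qed.

End PoissonTensor.

HB.instance Definition _ (R : comNzRingType) g (X : pt R g) :=
  GRing.isLinear.Build R (pt R g) (pt R g) _ (P0 X) (P0_linear X).
HB.instance Definition _ (R : comNzRingType) g :=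
  GRing.isLinear.Build R (pt R g) 'rV[R]_g.+1 _ (@mxtrace_pt R g)
    (@mxtrace_pt_linear R g).
HB.instance Definition _ (R : comNzRingType) g (X : pt R g) :=
  GRing.isLinear.Build R (pt R g) 'rV[R]_g.+1 _ (dCasimir X) (dCasimir_linear X).
HB.instance Definition _ (R : comNzRingType) g :=
  GRing.isLinear.Build R (pt R g) 'rV[R]_g.+1 _ (@lower_left_pt R g)
    (@lower_left_pt_linear R g).

Section Field.
Variables (C : fieldType) (g : nat).
Hypothesis two_neq0 : (2 : C) != 0.
Implicit Types X W U V : pt C g.

Lemma dH_sum X k V : dH X k V = \sum_(a < k.+1) \tr (ext0 V a *m Xext X (k - a)).
Proof.
rewrite /dH /Hcoef.
have -> : (2 : {poly C})^-1 = (2^-1)%:P by rewrite -polyCV rmorph_nat.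
rewrite coefMC coef_mxtrace_Xlam_sq coef_sum.
under eq_bigr do rewrite !Xext_perturb coef1_mxtrace_mul.
rewrite big_split /=.
have -> : \sum_(a < k.+1) \tr (Xext X a *m ext0 V (k - a))
        = \sum_(a < k.+1) \tr (ext0 V a *m Xext X (k - a)).
  rewrite (reindex_inj rev_ord_inj) /=; apply: eq_bigr => a _.
  by rewrite mxtrace_mulC subSS subKn // -ltnS.
by rewrite -mulr2n; field.
Qed.

Lemma dH_pairing X k V : (g <= k)%N -> dH X k V = pairing (gradH X k) V.
Proof.
move=> gek; rewrite dH_sum.
rewrite (@sumr_ord_trunc _ (fun a => \tr (ext0 V a *m Xext X (k - a))) g.+1) //.
  by apply: eq_bigr => j _; rewrite /ext0 ltn_ord inord_val ffunE mxtrace_mulC.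
by move=> j ltj; rewrite /ext0 ltnNge ltj /= mul0mx mxtrace0.
Qed.

Lemma P0_gradH X k : (g.+1 <= k)%N -> P0 X (gradH X k) = 0.
Proof.
move=> ltk; apply/ffunP => i; rewrite !ffunE.
under eq_bigr do rewrite ffunE.
pose f j := lie (Xext X (i + j + 1)) (Xext X (k - j)).
have f0 j : (g - i + 1 <= j)%N -> f j = 0.
  move=> lej; rewrite /f Xext_gt; last by have := ltn_ord i; lia.
  by rewrite /lie mul0mx mulmx0 subrr.
have -> : \sum_(j < g.+1 | (i + j <= g)%N) lie (Xext X (i + j + 1)) (Xext X (k - j))
        = \sum_(j < g.+1) f j.
  rewrite big_mkcond /=; apply: eq_bigr => j _; case: ifP => // /negbT.
  by rewrite -ltnNge => ltj; rewrite f0 //; have := ltn_ord i; lia.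
rewrite (@sumr_ord_trunc _ f (g - i + 1)); last exact: f0; last by lia.
rewrite -(@sumr_ord_trunc _ f (g - i + 1) (k - i)) //; last by have := ltn_ord i; lia.
(* j |-> k - i - 1 - j swaps the two arguments of the bracket *)
apply: (@double_eq0 _ 'M[C]_2) => //.
rewrite mulr2n; apply/eqP; rewrite addr_eq0; apply/eqP.
rewrite [LHS](reindex_inj rev_ord_inj) /= -sumrN; apply: eq_bigr => j _.
have ltj := ltn_ord j.
by rewrite /f [in RHS]lie_antisym opprK; congr (lie (Xext X _) (Xext X _)); lia.
Qed.

Lemma pairing_gradH_P0 X k W : (g.+1 <= k)%N -> pairing (gradH X k) (P0 X W) = 0.
Proof.
move=> ltk; rewrite pairingC pairing_P0 P0_gradH // /pairing big1 ?oppr0 // => i _.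
by rewrite ffunE mulmx0 mxtrace0.
Qed.

Lemma pairing_inj W W' : slpt W -> slpt W' ->
  (forall V, slpt V -> pairing W V = pairing W' V) -> W = W'.
Proof.
move=> slW slW' eqW; apply/ffunP => j; apply/eqP; rewrite -subr_eq0; apply/eqP.
apply: sl2_trace_form_nondeg => //; first by rewrite raddfB /= slW slW' subrr.
move=> Z trZ; rewrite mulmxBl raddfB /= -!pairing_delta_pt eqW ?subrr //.
exact: delta_pt_traceless.
Qed.

Lemma Casimir_gradient_P0 X k : slpt X -> (g.+1 <= k)%N -> forall W, slpt W ->
  (forall V, slpt V -> pairing W V = dH X k V) -> P0 X W = 0.
Proof.
move=> slX ltk W slW gradW; rewrite (@pairing_inj W (gradH X k)) ?P0_gradH //.
  exact: gradH_traceless.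
by move=> V slV; rewrite gradW // dH_pairing // ltnW.
Qed.

Lemma P0_kernel_eq0 X W : slpt W -> P0 X W = 0 ->
  (forall m, W m i1 i0 = 0) -> W = 0.
Proof.
move=> slW P0W W10.
suff W0 n (m : 'I_g.+1) : (m < n)%N -> W m = 0.
  by apply/ffunP => m; rewrite ffunE (W0 g.+1).
elim: n m => [//|n IHn] m ltmn.
have [/IHn//|lenm] := ltnP m n.
have ltmg := ltn_ord m.
(* component g - m of P0 X W is [A, W_m] plus brackets with the W_j, j < m *)
have := congr1 (fun F : pt C g => F (inord (g - m))) P0W.
rewrite /= !ffunE inordK; last by lia.
rewrite (bigD1 m) /=; last by lia.
rewrite big1 ?addr0 => [|j /andP[lej neqjm]]; last first.
  rewrite IHn ?/lie ?mulmx0 ?mul0mx ?subrr //.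
  by move: neqjm; rewrite -val_eqE /=; move: lej; lia.
have -> : (g - m + m + 1 = g.+1)%N by lia.
rewrite /Xext ltnn eqxx => AWm.
by rewrite (sl2_centralizer_Amx two_neq0 (slW m) AWm) W10 scale0r.
Qed.

Lemma dim_rV n : \dim {:'rV[C]_n} = n.
Proof. by rewrite dimvf dim_matrix mul1r. Qed.

Lemma slspaceP W : reflect (slpt W) (W \in slspace C g).
Proof.
rewrite memv_ker.
have -> : linfun (fun W0 : pt C g => \row_i \tr (W0 i)) W = mxtrace_pt W.
  exact: (lfunE (@mxtrace_pt C g) W).
apply: (iffP eqP) => [trW i | slW].
  by have := congr1 (fun r : 'rV[C]_g.+1 => r 0 i) trW; rewrite !mxE.
by apply/rowP => i; rewrite !mxE slW.
Qed.

Lemma dim_slspace : \dim (slspace C g) = (3 * g.+1)%N.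
Proof.
have surj : limg (linfun (@mxtrace_pt C g)) = fullv.
  apply/eqP; rewrite eqEsubv subvf /=; apply/subvP => r _.
  have -> : r = linfun (@mxtrace_pt C g) [ffun i => r 0 i *: delta_mx i0 i0].
    rewrite lfunE; apply/rowP => i.
    by rewrite !mxE ffunE mxtraceZ mxtrace_delta eqxx mulr1.
  exact: memv_img (memvf _).
have := limg_ker_dim (linfun (@mxtrace_pt C g)) fullv.
rewrite capfv surj dim_rV dimvf /dim /= card_ord dim_matrix.
(* [set] merges convertible but syntactically distinct copies of the
   dimension, which [lia] would take for different atoms *)
by rewrite -[(2 * 2)%R]/4%N; set d := \dim (slspace C g); lia.
Qed.

Definition casimir_mx X : 'M[C]_g.+1 :=
  \matrix_(m, k) \tr (Xext X (g.+1 + k - m) *m delta_mx i0 i1).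

Lemma casimir_mx_unit X : casimir_mx X \in unitmx.
Proof.
rewrite unitmxE det_trig.
  rewrite big1 ?unitr1 // => i _.
  by rewrite mxE addnK /Xext ltnn eqxx mxtrace_mul_delta Amx_delta mxE !eqxx.
apply/is_trig_mxP => i j ltij; rewrite mxE Xext_gt ?mul0mx ?mxtrace0 //.
by have := ltn_ord i; lia.
Qed.

Lemma dCasimir_delta_rows X (a : 'rV[C]_g.+1) :
  dCasimir X [ffun m => a 0 m *: delta_mx i0 i1] = a *m casimir_mx X.
Proof.
apply/rowP => k; rewrite !mxE; apply: eq_bigr => j _.
by rewrite !ffunE -scalemxAr mxtraceZ mxE.
Qed.

Lemma dCasimir_surj X r : exists2 V, slpt V & dCasimir X V = r.
Proof.
exists [ffun m => (r *m invmx (casimir_mx X)) 0 m *: delta_mx i0 i1].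
  by move=> m; rewrite ffunE mxtraceZ mxtrace_delta mulr0.
by rewrite dCasimir_delta_rows mulmxKV ?casimir_mx_unit.
Qed.

Lemma dCasimirE X V k : dCasimir X V 0 k = dH X (g.+1 + k) V.
Proof. by rewrite mxE dH_pairing // ltnW // ltn_addr. Qed.

Lemma dH_Casimirs_free X (c : 'I_g.+1 -> C) :
  (forall V, slpt V -> \sum_(k < g.+1) c k * dH X (g.+1 + k) V = 0) ->
  forall k, c k = 0.
Proof.
move=> dep k; have [V slV dV] := dCasimir_surj X (delta_mx 0 k).
rewrite -(dep V slV); under eq_bigr do rewrite -dCasimirE dV mxE eqxx /=.
by rewrite (bigD1 k) //= eqxx mulr1 big1 ?addr0 // => l /negbTE ->; rewrite mulr0.
Qed.

Lemma dim_dCasimir_img X : \dim (linfun (dCasimir X) @: slspace C g) = g.+1.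
Proof.
suff -> : (linfun (dCasimir X) @: slspace C g)%VS = fullv by rewrite dim_rV.
apply/eqP; rewrite eqEsubv subvf; apply/subvP => r _.
have [V /slspaceP slV <-] := dCasimir_surj X r.
by rewrite -(lfunE (dCasimir X)) memv_img.
Qed.

Lemma dim_P0_kernel X : (\dim (slspace C g :&: lker (linfun (P0 X))) <= g.+1)%N.
Proof.
pose ll : 'Hom(pt C g, 'rV[C]_g.+1) := linfun (@lower_left_pt C g).
have ker0 : (slspace C g :&: lker (linfun (P0 X)) :&: lker ll = 0)%VS.
  apply/eqP; rewrite -subv0; apply/subvP => W.
  rewrite !memv_cap memv0 => /andP[/andP[/slspaceP slW]].
  rewrite !memv_ker !lfunE /= => /eqP P0W /eqP llW.
  apply/eqP/(P0_kernel_eq0 slW P0W) => m.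
  by have := congr1 (fun r : 'rV[C]_g.+1 => r 0 m) llW; rewrite !mxE.
by rewrite -(limg_dim_eq ker0) -[X in (_ <= X)%N]dim_rV dimvS ?subvf.
Qed.

Lemma P0_img_sub X :
  (linfun (P0 X) @: slspace C g <= slspace C g :&: lker (linfun (dCasimir X)))%VS.
Proof.
apply/subvP => _ /memv_imgP [W _ ->]; rewrite memv_cap memv_ker !lfunE /=.
apply/andP; split; first by apply/slspaceP; exact: P0_traceless.
by apply/eqP/rowP => k; rewrite !mxE pairing_gradH_P0 // leq_addr.
Qed.

Lemma dim_slspace_ker_dCasimir X :
  \dim (slspace C g :&: lker (linfun (dCasimir X))) = (2 * g.+1)%N.
Proof.
have := limg_ker_dim (linfun (dCasimir X)) (slspace C g).
by rewrite dim_dCasimir_img dim_slspace; set d := \dim (_ :&: _); lia.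
Qed.

Lemma P0_img X :
  (linfun (P0 X) @: slspace C g)%VS = (slspace C g :&: lker (linfun (dCasimir X)))%VS.
Proof.
apply/eqP; rewrite eqEdim P0_img_sub dim_slspace_ker_dCasimir /=.
have := limg_ker_dim (linfun (P0 X)) (slspace C g).
have := dim_P0_kernel X; rewrite dim_slspace.
by set k := \dim (_ :&: _); set i := \dim (_ @: _); lia.
Qed.

Lemma dim_P0_img X : \dim (linfun (P0 X) @: slspace C g) = (2 * g.+1)%N.
Proof. by rewrite P0_img dim_slspace_ker_dCasimir. Qed.

Lemma P0_imageP X V :
  (slpt V /\ forall k, (g.+1 <= k <= 2 * g + 1)%N -> dH X k V = 0) <->
  exists2 W, slpt W & V = P0 X W.
Proof.
split=> [[slV dHV] | [W slW ->]]; last first.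
  split=> [|k /andP[ltk _]]; first exact: P0_traceless.
  by rewrite dH_pairing ?pairing_gradH_P0 // ltnW.
have : V \in (linfun (P0 X) @: slspace C g)%VS.
  rewrite P0_img memv_cap memv_ker; apply/andP; split; first exact/slspaceP.
  apply/eqP/rowP => k; rewrite lfunE /= dCasimirE mxE dHV //.
  by have := ltn_ord k; lia.
by case/memv_imgP => W /slspaceP slW ->; exists W; rewrite ?lfunE.
Qed.

End Field.

Theorem mainTheorem3 (C : numClosedFieldType) (g : nat) (hg : (1 <= g)%N) :
  [/\
   (* symplectic leaves have dimension 2(g+1): rank of P_0 at every point *)
   (forall X : pt C g, slpt X ->
      \dim (linfun (P0 X) @: slspace C g)%VS = (2 * g.+1)%N),
   (* H_{g+1}, ..., H_{2g+1} are Casimirs: their differentials lie in ker P_0 *)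
   (forall X : pt C g, slpt X ->
    forall k : nat, (g.+1 <= k <= 2 * g + 1)%N ->
    forall W : pt C g, slpt W ->
      (forall V : pt C g, slpt V -> pairing W V = dH X k V) ->
      P0 X W = 0),
   (* they are functionally independent: differentials linearly independent *)
   (forall X : pt C g, slpt X ->
    forall c : 'I_g.+1 -> C,
      (forall V : pt C g, slpt V ->
         \sum_(k < g.+1) c k * dH X (g.+1 + k) V = 0) ->
      forall k, c k = 0)
 &  (* tangent spaces of the leaves = tangent spaces of the level sets *)
   (forall X : pt C g, slpt X ->
    forall V : pt C g,
      (slpt V /\ forall k : nat, (g.+1 <= k <= 2 * g + 1)%N -> dH X k V = 0)
      <-> exists2 W : pt C g, slpt W & V = P0 X W)].
Proof.
have two_neq0 : (2 : C) != 0 by rewrite pnatr_eq0.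
split=> [X _ | X slX k /andP[ltk _] | X _ | X _ V].
- exact: dim_P0_img two_neq0 X.
- exact: (Casimir_gradient_P0 two_neq0 slX ltk).
- exact: dH_Casimirs_free two_neq0 X.
- exact: P0_imageP two_neq0 X V.
Qed.
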